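(* Let $\lambda\in\mathbb{R}\setminus\{0\}$, $k\in\mathbb{Z}$, $u\in\mathbb{C}$ with $u\neq1$, and $x_1,x_2,y\in\mathbb{R}$. Then for every integer $n\ge0$, \[ FG_{n,\lambda}^{[k,c]}(x_1+x_2,y;u)=\sum_{m=0}^{n}\binom{n}{m}\sum_{r=0}^{m}S_{2,\lambda}^{(x_1)}(m,r)\,(x_2)_r\,FG_{n-m,\lambda}^{[k,c]}(0,y;u) \] and \[ FG_{n,\lambda}^{[k,s]}(x_1+x_2,y;u)=\sum_{m=0}^{n}\binom{n}{m}\sum_{r=0}^{m}S_{2,\lambda}^{(x_1)}(m,r)\,(x_2)_r\,FG_{n-m,\lambda}^{[k,s]}(0,y;u). \]
   Context: All generating functions are formal power series in $t$. For $z\in\mathbb{C}$: $(z)_{0,\lambda}=1$ and $(z)_{n,\lambda}=z(z-\lambda)\cdots(z-(n-1)\lambda)$ for $n\ge1$; $(z)_0=1$ and $(z)_r=z(z-1)\cdots(z-r+1)$ is the ordinary falling factorial. The degenerate exponential is $e_\lambda^{z}(t)=\sum_{n\ge0}(z)_{n,\lambda}\frac{t^n}{n!}$ (i.e. $(1+\lambda t)^{z/\lambda}$), and $e_\lambda(t)=e_\lambda^{1}(t)$. Also $\log_\lambda(1+t)=\frac{1}{\lambda}\big((1+t)^\lambda-1\big)$. The degenerate $\lambda$-Stirling polynomials of the second kind are defined by $\frac{(e_\lambda(t)-1)^r}{r!}e_\lambda^{x}(t)=\sum_{n\ge r}S_{2,\lambda}^{(x)}(n,r)\frac{t^n}{n!}$.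 The modified degenerate polyexponential function is $\mathrm{Ei}_{k,\lambda}(x)=\sum_{n\ge1}\frac{(1)_{n,\lambda}}{n^k(n-1)!}x^n$. The degenerate cosine and sine are $\cos_\lambda^{(y)}(t)=\frac{e_\lambda^{iy}(t)+e_\lambda^{-iy}(t)}{2}$ and $\sin_\lambda^{(y)}(t)=\frac{e_\lambda^{iy}(t)-e_\lambda^{-iy}(t)}{2i}$. The cosine and sine degenerate poly-Frobenius-Genocchi polynomials are defined by $\sum_{n\ge0}FG_{n,\lambda}^{[k,c]}(x,y;u)\frac{t^n}{n!}=\frac{(1-u)\mathrm{Ei}_{k,\lambda}(\log_\lambda(1+t))}{e_\lambda(t)-u}e_\lambda^{x}(t)\cos_\lambda^{(y)}(t)$ and $\sum_{n\ge0}FG_{n,\lambda}^{[k,s]}(x,y;u)\frac{t^n}{n!}=\frac{(1-u)\mathrm{Ei}_{k,\lambda}(\log_\lambda(1+t))}{e_\lambda(t)-u}e_\lambda^{x}(t)\sin_\lambda^{(y)}(t)$. *)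

From HB Require Import structures.
From mathcomp Require Import all_boot all_order all_algebra.
From mathcomp Require Import reals.
From mathcomp Require Import complex.
Set Implicit Arguments. Unset Strict Implicit. Unset Printing Implicit Defensive.
Import Order.TTheory GRing.Theory Num.Theory.
Local Open Scope ring_scope.

Section FPS.
Variable F : fieldType.

(* a formal power series sum_n a n t^n is represented by a : nat -> F *)
Definition sone : nat -> F := fun n => (n == 0%N)%:R.
Definition sadd (a b : nat -> F) : nat -> F := fun n => a n + b n.
Definition ssub (a b : nat -> F) : nat -> F := fun n => a n - b n.
Definition sscale (c : F) (a : nat -> F) : nat -> F := fun n => c * a n.
Definition smul (a b : nat -> F) : nat -> F :=
  fun n => \sum_(i < n.+1) a i * b (n - i)%N.
Definition spow (a : nat -> F) (r : nat) : nat -> F := iter r (smul a) sone.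
(* composition f(g(t)), meaningful when g 0 = 0 (then finite sums suffice) *)
Definition scomp (f g : nat -> F) : nat -> F :=
  fun n => \sum_(m < n.+1) f m * spow g m n.
(* multiplicative inverse of a series with a 0 != 0:
   1/(a0 + h) = sum_m (-1)^m h^m / a0^(m+1), where h = a - a0 *)
Definition sinv (a : nat -> F) : nat -> F :=
  scomp (fun m => (-1) ^+ m / (a 0%N) ^+ m.+1)
        (fun n => if n is 0%N then 0 else a n).

Definition dfall (z lam : F) (n : nat) : F := \prod_(i < n) (z - i%:R * lam).
Definition ffall (z : F) (r : nat) : F := \prod_(i < r) (z - i%:R).

Definition dexp (lam z : F) : nat -> F := fun n => dfall z lam n / n`!%:R.
(* log_lam(1+t) = ((1+t)^lam - 1)/lam, with (1+t)^lam = sum_n (lam)_n t^n/n! *)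
Definition dlog (lam : F) : nat -> F :=
  fun n => if n is 0%N then 0 else ffall lam n / (lam * n`!%:R).
Definition dEi (k : int) (lam : F) : nat -> F :=
  fun n => if n is 0%N then 0
           else dfall 1 lam n / ((n%:R) ^ k * (n.-1)`!%:R).

Definition dStirling2 (lam x : F) (n r : nat) : F :=
  n`!%:R * smul (fun m => spow (ssub (dexp lam 1) sone) r m / r`!%:R)
                (dexp lam x) n.

(* common factor (1-u) Ei_{k,lam}(log_lam(1+t)) / (e_lam(t) - u) e_lam^x(t) *)
Definition FGcore (lam : F) (k : int) (u x : F) : nat -> F :=
  smul (smul (sscale (1 - u) (sinv (ssub (dexp lam 1) (sscale u sone))))
             (scomp (dEi k lam) (dlog lam)))
       (dexp lam x).
End FPS.

Section Trig.
Variable R : realType.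
Local Open Scope complex_scope.
Definition dcos (lam y : R[i]) : nat -> R[i] :=
  fun n => (dexp lam ('i * y) n + dexp lam (- ('i * y)) n) / 2.
Definition dsin (lam y : R[i]) : nat -> R[i] :=
  fun n => (dexp lam ('i * y) n - dexp lam (- ('i * y)) n) / (2 * 'i).

Definition FGc (lam : R[i]) (k : int) (u x y : R[i]) (n : nat) : R[i] :=
  n`!%:R * smul (FGcore lam k u x) (dcos lam y) n.
Definition FGs (lam : R[i]) (k : int) (u x y : R[i]) (n : nat) : R[i] :=
  n`!%:R * smul (FGcore lam k u x) (dsin lam y) n.
End Trig.

From HB Require Import structures.
From mathcomp Require Import all_boot all_order all_algebra.
From mathcomp Require Import reals complex ring.
Set Implicit Arguments. Unset Strict Implicit. Unset Printing Implicit Defensive.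
Import Order.TTheory GRing.Theory Num.Theory.
Local Open Scope ring_scope.

(* Both generating functions are (prefactor) * e_lam^x(t) * (trigonometric
   factor), so only the factor e_lam^(x1+x2)(t) = e_lam^x1(t) e_lam^x2(t)
   changes with x.  Expanding e_lam^x2(t) = (1 + (e_lam(t) - 1))^x2 binomially
   gives sum_r (x2)_r (e_lam(t) - 1)^r / r!, and multiplying by e_lam^x1(t)
   turns (e_lam(t) - 1)^r / r! into the Stirling polynomials S2^(x1)(m, r).
   The binomial expansion is checked for natural x2, where it is the binomial
   theorem for (e_lam(t))^x2, and extends to all x2 because both sides are
   polynomials in x2.  Identities between series are proved coefficientwise by
   comparing with truncations, which are ordinary polynomials. *)

Lemma big_ord_widen_eq0 (V : nmodType) m n (G : nat -> V) :
  (m <= n)%N -> (forall i, (m <= i)%N -> G i = 0) ->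
  \sum_(i < m) G i = \sum_(i < n) G i.
Proof.
move=> le_mn G0; rewrite (big_ord_widen _ _ le_mn) big_mkcond /=.
by apply: eq_bigr => i _; case: ltnP => // /G0 ->.
Qed.

Section TruncatedSeries.
Variable F : fieldType.
Implicit Types (a b c : nat -> F) (p q : {poly F}).

Definition agree n a p := forall m, (m <= n)%N -> a m = p`_m.

Definition trunc n a : {poly F} := \poly_(i < n.+1) a i.

Lemma agree_trunc n a : agree n a (trunc n a).
Proof. by move=> m le_mn; rewrite coef_poly ltnS le_mn. Qed.

Lemma agree1 n : agree n (sone F) 1.
Proof. by move=> m _; rewrite coef1. Qed.

Lemma agreeB n a b p q : agree n a p -> agree n b q -> agree n (ssub a b) (p - q).
Proof. by move=> ap bq m le_mn; rewrite coefB /ssub ap ?bq. Qed.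

Lemma agreeM n a b p q : agree n a p -> agree n b q -> agree n (smul a b) (p * q).
Proof.
move=> ap bq m le_mn; rewrite /smul coefM; apply: eq_bigr => i _.
have le_im : (i <= m)%N by rewrite -ltnS.
by rewrite ap ?bq ?(leq_trans (leq_subr _ _) le_mn) ?(leq_trans le_im le_mn).
Qed.

Lemma agreeX n a p r : agree n a p -> agree n (spow a r) (p ^+ r).
Proof.
move=> ap; elim: r => [|r IH]; first exact: agree1.
by rewrite exprS; apply: agreeM.
Qed.

Lemma eq_smul a a' b b' : a =1 a' -> b =1 b' -> smul a b =1 smul a' b'.
Proof. by move=> aa' bb' n; apply: eq_bigr => i _; rewrite aa' bb'. Qed.

Lemma smulC a b : smul a b =1 smul b a.
Proof.
move=> n; have tr := @agree_trunc n.
by rewrite (agreeM (tr a) (tr b)) ?(agreeM (tr b) (tr a)) // mulrC.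
Qed.

Lemma smulA a b c : smul a (smul b c) =1 smul (smul a b) c.
Proof.
move=> n; have tr := @agree_trunc n.
rewrite (agreeM (tr a) (agreeM (tr b) (tr c))) //.
by rewrite (agreeM (agreeM (tr a) (tr b)) (tr c)) // mulrA.
Qed.

Lemma smulr1 a : smul a (sone F) =1 a.
Proof.
move=> n; have tr := @agree_trunc n.
by rewrite (agreeM (tr a) (@agree1 n)) // mulr1 -tr.
Qed.

Lemma spow_coef_eq0 a r m : a 0%N = 0 -> (m < r)%N -> spow a r m = 0.
Proof.
move=> a0; elim: r m => [|r IH] m //= lt_mr.
apply: big1 => -[[|i] lt_im] _ /=; first by rewrite a0 mul0r.
rewrite IH ?mulr0 // ltn_subLR; last by rewrite -ltnS.
by rewrite addSn ltnS -ltnS (leq_trans lt_mr) // ltnS leq_addl.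
Qed.

Lemma fact_smul a b n :
  n`!%:R * smul a b n =
  \sum_(m < n.+1) 'C(n, m)%:R * (m`!%:R * a m) * ((n - m)`!%:R * b (n - m)%N).
Proof.
rewrite mulr_sumr; apply: eq_bigr => m _.
have le_mn : (m <= n)%N by rewrite -ltnS.
by rewrite -(bin_fact le_mn) !natrM; ring.
Qed.

End TruncatedSeries.

Section DegenerateFalling.
Variable F : fieldType.

Lemma dfallS (z lam : F) n : dfall z lam n.+1 = dfall z lam n * (z - n%:R * lam).
Proof. by rewrite /dfall big_ord_recr. Qed.

Lemma dfallD (z w lam : F) n : dfall (z + w) lam n =
  \sum_(m < n.+1) 'C(n, m)%:R * dfall z lam m * dfall w lam (n - m).
Proof.
elim: n => [|n IH]; first by rewrite big_ord1 /dfall !big_ord0 !mulr1.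
(* z + w - n lam = (z - m lam) + (w - (n - m) lam) splits each term in two *)
have split_term (m : 'I_n.+1) :
    'C(n, m)%:R * dfall z lam m * dfall w lam (n - m) * (z + w - n%:R * lam) =
    'C(n, m)%:R * dfall z lam m.+1 * dfall w lam (n - m)
    + 'C(n, m)%:R * dfall z lam m * dfall w lam (n - m).+1.
  have le_mn : (m <= n)%N by rewrite -ltnS.
  by rewrite !dfallS natrB //; ring.
rewrite dfallS IH mulr_suml (eq_bigr _ (fun m _ => split_term m)) big_split /=.
rewrite [RHS]big_ord_recl /= subn0.
under [X in _ = _ + X]eq_bigr => i _ do rewrite /bump /= add1n binS natrD subSS !mulrDl.
rewrite big_split /= [RHS]addrA [RHS]addrC; congr (_ + _).
rewrite [in RHS]big_ord_recr /= (bin_small (ltnSn n)) !mul0r addr0.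
rewrite [LHS]big_ord_recl /= subn0 !bin0; congr (_ + _).
by apply: eq_bigr => i _; rewrite /bump /= add1n subnSK.
Qed.

Lemma ffallE (z : F) r : ffall z r = dfall z 1 r.
Proof. by apply: eq_bigr => i _; rewrite mulr1. Qed.

Definition dfall_poly (lam : F) n : {poly F} := \prod_(i < n) ('X - (i%:R * lam)%:P).

Lemma horner_dfall_poly (lam z : F) n : (dfall_poly lam n).[z] = dfall z lam n.
Proof. by rewrite horner_prod; apply: eq_bigr => i _; rewrite hornerXsubC. Qed.

End DegenerateFalling.

Section DegenerateExponential.
Variable F : numFieldType.
Implicit Types (a b : nat -> F) (p q : {poly F}).

Lemma fact_neq0 n : (n`!%:R : F) != 0.
Proof. by rewrite pnatr_eq0 -lt0n fact_gt0. Qed.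

Lemma dfallE (z lam : F) n : dfall z lam n = n`!%:R * dexp lam z n.
Proof. by rewrite /dexp mulrC divfK ?fact_neq0. Qed.

Lemma dexpD (lam z w : F) : dexp lam (z + w) =1 smul (dexp lam z) (dexp lam w).
Proof.
move=> n; apply: (mulfI (fact_neq0 n)).
rewrite fact_smul -dfallE dfallD; apply: eq_bigr => m _.
by rewrite -!dfallE.
Qed.

Lemma dexp0 (lam : F) : dexp lam 0 =1 sone F.
Proof.
move=> [|n]; first by rewrite /dexp /dfall big_ord0 divr1.
by rewrite /dexp /dfall big_ord_recl /= mul0r subrr !mul0r.
Qed.

Lemma dexp_natr (lam : F) (N : nat) : dexp lam N%:R =1 spow (dexp lam 1) N.
Proof.
elim: N => [|N IH]; first exact: dexp0.
by move=> n; rewrite -add1n natrD dexpD; apply: eq_smul.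
Qed.

Definition dexpm1 (lam : F) : nat -> F := ssub (dexp lam 1) (sone F).

Lemma dexpm1_0 (lam : F) : dexpm1 lam 0%N = 0.
Proof. by rewrite /dexpm1 /ssub /dexp /dfall big_ord0 divr1 subrr. Qed.

Lemma ffall_natr (N r : nat) : ffall (N%:R : F) r = (N ^_ r)%:R.
Proof.
elim: r => [|r IH]; first by rewrite /ffall big_ord0 ffactn0.
rewrite /ffall big_ord_recr /= -/(ffall _ _) IH ffactnSr natrM.
case: (leqP r N) => [le_rN | lt_Nr]; first by rewrite natrB.
by rewrite ffact_small // !mul0r.
Qed.

Lemma dexp_binomial_natr (lam : F) (N m : nat) :
  dexp lam N%:R m = \sum_(r < m.+1) ffall N%:R r / r`!%:R * spow (dexpm1 lam) r m.
Proof.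
rewrite dexp_natr (agreeX N (@agree_trunc _ m (dexp lam 1)) (leqnn m)).
set P := trunc m (dexp lam 1).
have agree_dexpm1 : agree m (dexpm1 lam) (P - 1).
  by apply: agreeB; [apply: agree_trunc | apply: agree1].
rewrite -[P](subrK 1) exprD1n coef_sum.
under eq_bigr => r _ do rewrite coefMn -(agreeX r agree_dexpm1 (leqnn m)).
have binE r : ffall N%:R r / r`!%:R * spow (dexpm1 lam) r m =
              spow (dexpm1 lam) r m *+ 'C(N, r).
  by rewrite ffall_natr -bin_ffact natrM mulfK ?fact_neq0 // mulr_natl.
under [RHS]eq_bigr => r _ do rewrite binE.
pose G r := spow (dexpm1 lam) r m *+ 'C(N, r).
rewrite (@big_ord_widen_eq0 _ _ (m.+1 + N.+1) G) ?leq_addl //; last first.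
  by move=> r lt_Nr; rewrite /G bin_small ?mulr0n.
rewrite [RHS](@big_ord_widen_eq0 _ _ (m.+1 + N.+1) G) ?leq_addr //.
by move=> r lt_mr; rewrite /G spow_coef_eq0 ?dexpm1_0 ?mul0rn.
Qed.

Lemma horner_natr_inj p q : (forall N : nat, p.[N%:R] = q.[N%:R]) -> p = q.
Proof.
move=> pq; apply/eqP; rewrite -subr_eq0; apply/eqP.
apply: (@roots_geq_poly_eq0 _ _ [seq i%:R | i <- iota 0 (size (p - q))]).
- by apply/allP => _ /mapP[i _ ->]; rewrite /root !hornerE pq subrr.
- by rewrite map_inj_uniq ?iota_uniq // => i j /eqP; rewrite eqr_nat => /eqP.
- by rewrite size_map size_iota.
Qed.

Lemma dexp_binomial (lam x : F) m :
  dexp lam x m = \sum_(r < m.+1) ffall x r / r`!%:R * spow (dexpm1 lam) r m.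
Proof.
pose lhs := dfall_poly lam m * (m`!%:R^-1)%:P.
pose rhs := \sum_(r < m.+1) dfall_poly 1 r * (spow (dexpm1 lam) r m / r`!%:R)%:P.
have lhsE z : lhs.[z] = dexp lam z m by rewrite hornerM hornerC horner_dfall_poly.
have rhsE z : rhs.[z] = \sum_(r < m.+1) ffall z r / r`!%:R * spow (dexpm1 lam) r m.
  rewrite horner_sum; apply: eq_bigr => r _.
  by rewrite hornerM hornerC horner_dfall_poly -ffallE mulrA mulrAC.
have lhs_rhs : lhs = rhs.
  by apply: horner_natr_inj => N; rewrite lhsE rhsE dexp_binomial_natr.
by rewrite -lhsE lhs_rhs rhsE.
Qed.

Lemma dStirling2E (lam x : F) m r :
  dStirling2 lam x m r = m`!%:R / r`!%:R * smul (spow (dexpm1 lam) r) (dexp lam x) m.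
Proof.
rewrite /dStirling2 -mulrA; congr (_ * _).
by rewrite mulr_sumr; apply: eq_bigr => i _; rewrite mulrAC mulrC.
Qed.

Lemma dfallD_dStirling2 (lam x z : F) m :
  dfall (x + z) lam m = \sum_(r < m.+1) dStirling2 lam x m r * ffall z r.
Proof.
have expand (i : 'I_m.+1) : dexp lam z i =
    \sum_(r < m.+1) ffall z r / r`!%:R * spow (dexpm1 lam) r i.
  rewrite dexp_binomial (@big_ord_widen_eq0 _ i.+1 m.+1
    (fun r => ffall z r / r`!%:R * spow (dexpm1 lam) r i)) //.
  by move=> r lt_ir; rewrite spow_coef_eq0 ?dexpm1_0 ?mulr0.
rewrite dfallE addrC dexpD /smul.
under eq_bigr => i _ do rewrite expand mulr_suml.
rewrite exchange_big mulr_sumr; apply: eq_bigr => r _ /=.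
rewrite dStirling2E /smul !mulr_sumr mulr_suml; apply: eq_bigr => i _.
by ring.
Qed.

Lemma fact_smul_dexpD (lam x z : F) a b n :
  n`!%:R * smul (smul a (dexp lam (x + z))) b n =
  \sum_(m < n.+1) 'C(n, m)%:R *
    \sum_(r < m.+1) dStirling2 lam x m r * ffall z r *
      ((n - m)`!%:R * smul (smul a (dexp lam 0)) b (n - m)).
Proof.
have drop_dexp0 : smul (smul a (dexp lam 0)) b =1 smul a b.
  by apply: eq_smul => // k; rewrite (eq_smul (frefl a) (dexp0 lam)) smulr1.
have dexp_first : smul (smul a (dexp lam (x + z))) b n =
                  smul (dexp lam (x + z)) (smul a b) n.
  by rewrite smulA; apply: eq_smul (smulC _ _) (frefl b) n.
rewrite dexp_first fact_smul; apply: eq_bigr => m _.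
by rewrite drop_dexp0 -dfallE dfallD_dStirling2 -mulrA mulr_suml.
Qed.

End DegenerateExponential.

Local Open Scope complex_scope.

Theorem theorem6 (R : realType) (lam : R) (k : int) (u : R[i]) (x1 x2 y : R) :
  lam != 0 -> u != 1 ->
  forall n : nat,
    FGc lam%:C k u (x1 + x2)%:C y%:C n =
      \sum_(m < n.+1) 'C(n, m)%:R *
        \sum_(r < m.+1) dStirling2 lam%:C x1%:C m r * ffall x2%:C r *
          FGc lam%:C k u 0 y%:C (n - m)
    /\
    FGs lam%:C k u (x1 + x2)%:C y%:C n =
      \sum_(m < n.+1) 'C(n, m)%:R *
        \sum_(r < m.+1) dStirling2 lam%:C x1%:C m r * ffall x2%:C r *
          FGs lam%:C k u 0 y%:C (n - m).
Proof.
(* No assumption on lam or u is needed: only the factor e_lam^x(t) depends on x. *)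
move=> _ _ n; rewrite rmorphD /FGc /FGcore.
by split; apply: fact_smul_dexpD.
Qed.
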